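(* There is a universal constant $C$ such that for all $\rho_0,\rho_1,\rho_2>0$, all $\Theta_{01},\Theta_{02},\Theta_{12}\in[0,\pi/2]$, and $j\in\{1,2\}$, $$\frac{\partial\Phi_0(\rho_0,\rho_1,\rho_2;\Theta_{01},\Theta_{02},\Theta_{12})}{\partial(\log\rho_j)}\le C\,\Phi_0(\rho_0,\rho_1,\rho_2;\Theta_{01},\Theta_{02},\Theta_{12}).$$
   Context: Given $\rho_0,\rho_1,\rho_2>0$ and $\Theta_{ij}\in[0,\pi/2]$ for $(i,j)\in\{(0,1),(0,2),(1,2)\}$, there is a configuration of three closed disks $D_0,D_1,D_2$ in $\mathbb{C}$, unique up to euclidean isometries, with euclidean radii $\rho(D_k)=\rho_k$ and with the dihedral angle of $D_i$ and $D_j$ equal to $\Theta_{ij}$ (the dihedral angle of two intersecting disks $D,D'$ being the angle in $[0,\pi)$ between the clockwise tangent of $\partial D$ and the counterclockwise tangent of $\partial D'$ at a point of $\partial D\cap\partial D'$). Let $A_k$ be the center of $D_k$, and let $\Phi_k(\rho_0,\rho_1,\rho_2;\Theta_{01},\Theta_{02},\Theta_{12})$ be the angle of the triangle $A_0A_1A_2$ at $A_k$. *)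

From Stdlib Require Import Reals.
From Coquelicot Require Import Coquelicot.
Open Scope R_scope.

(* Distance between the centers of two closed disks with radii ri, rj
   meeting at dihedral angle Th (Th = 0: externally tangent,
   Th = PI/2: orthogonal):  |A_i A_j|^2 = ri^2 + rj^2 + 2 ri rj cos Th. *)
Definition center_dist (ri rj Th : R) : R :=
  sqrt (ri ^ 2 + rj ^ 2 + 2 * ri * rj * cos Th).

Definition tri_angle (a b c : R) : R :=
  acos ((a ^ 2 + b ^ 2 - c ^ 2) / (2 * a * b)).

(* Phi_0(rho0,rho1,rho2;Th01,Th02,Th12): angle at A_0 of the triangle of
   centers A_0 A_1 A_2. *)
Definition Phi0 (r0 r1 r2 T01 T02 T12 : R) : R :=
  tri_angle (center_dist r0 r1 T01) (center_dist r0 r2 T02)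
            (center_dist r1 r2 T12).

Definition Phi0_log (j : nat) (r0 r1 r2 T01 T02 T12 : R) (t : R) : R :=
  Phi0 r0 (if Nat.eqb j 1 then exp t else r1)
          (if Nat.eqb j 2 then exp t else r2) T01 T02 T12.

Definition rho_of (j : nat) (r1 r2 : R) : R :=
  if Nat.eqb j 1 then r1 else r2.

From Stdlib Require Import Reals Psatz.
From Coquelicot Require Import Coquelicot.
Open Scope R_scope.

(* The angle is Phi_0 = acos g, where g is the law-of-cosines expression in the
   squared side lengths A = |A0A1|^2, B = |A0A2|^2, C = |A1A2|^2; each of these
   is a quadratic form in the radii.  The chain rule gives
   dPhi_0/dt = -g'/sin Phi_0, and a polynomial inequality in the radii and the
   cosines of the dihedral angles (proved by an explicit nonnegative
   certificate) shows -g' <= 2 sin^2 Phi_0.  Hence dPhi_0/dt <= 2 sin Phi_0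
   <= 2 Phi_0, so C = 2 works; the case j = 2 follows by exchanging D_1, D_2. *)

Definition center_dist2 (p q c : R) : R := p ^ 2 + q ^ 2 + 2 * p * q * c.

(* Sixteen times the squared area of a triangle with squared sides A, B, C. *)
Definition heron (A B C : R) : R := 4 * A * B - (A + B - C) ^ 2.

Definition cos_law (A B C : R) : R := (A + B - C) / (2 * sqrt A * sqrt B).

(* When A and C move with velocities dA and dC and B is fixed, cos_law moves with
   velocity - cos_law_rate / (2 A^(3/2) B^(1/2)). *)
Definition cos_law_rate (A B C dA dC : R) : R := A * dC - (A + C - B) * dA / 2.

Lemma cos_range_01 (T : R) : 0 <= T <= PI / 2 -> 0 <= cos T <= 1.
Proof.
  intros HT. pose proof PI_RGT_0.
  split; [apply cos_ge_0; lra | apply COS_bound].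
Qed.

Lemma center_dist2_comm (p q c : R) : center_dist2 p q c = center_dist2 q p c.
Proof. unfold center_dist2; ring. Qed.

Lemma center_dist2_pos (p q c : R) :
  0 < p -> 0 < q -> 0 <= c -> 0 < center_dist2 p q c.
Proof.
  intros Hp Hq Hc. unfold center_dist2.
  assert (0 <= p * q * c) by (repeat apply Rmult_le_pos; lra).
  assert (0 < p ^ 2) by (apply pow_lt; lra).
  assert (0 < q ^ 2) by (apply pow_lt; lra).
  lra.
Qed.

Lemma center_dist_bounds (p q c : R) :
  0 < p -> 0 < q -> 0 <= c <= 1 ->
  let d := sqrt (center_dist2 p q c) in p < d /\ q < d /\ d <= p + q.
Proof.
  intros Hp Hq Hc d.
  assert (0 <= p * q * c) by (repeat apply Rmult_le_pos; lra).
  assert (p * q * c <= p * q)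
    by (rewrite <- (Rmult_1_r (p * q)) at 2; apply Rmult_le_compat_l; nra).
  assert (0 < p ^ 2) by (apply pow_lt; lra).
  assert (0 < q ^ 2) by (apply pow_lt; lra).
  unfold d, center_dist2.
  repeat split.
  - rewrite <- (sqrt_pow2 p) at 1 by lra. apply sqrt_lt_1_alt. lra.
  - rewrite <- (sqrt_pow2 q) at 1 by lra. apply sqrt_lt_1_alt. lra.
  - rewrite <- (sqrt_pow2 (p + q)) by lra. apply sqrt_le_1_alt. nra.
Qed.

Lemma heron_sides (a b c : R) :
  heron (a ^ 2) (b ^ 2) (c ^ 2) = (a + b + c) * (- a + b + c) * (a - b + c) * (a + b - c).
Proof. unfold heron; ring. Qed.

Lemma heron_center_dist2_pos (u v w x y z : R) :
  0 < u -> 0 < v -> 0 < w -> 0 <= x <= 1 -> 0 <= y <= 1 -> 0 <= z <= 1 ->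
  0 < heron (center_dist2 u v x) (center_dist2 u w y) (center_dist2 v w z).
Proof.
  intros Hu Hv Hw Hx Hy Hz.
  destruct (center_dist_bounds u v x Hu Hv Hx) as (ua & va & a_le).
  destruct (center_dist_bounds u w y Hu Hw Hy) as (ub & wb & b_le).
  destruct (center_dist_bounds v w z Hv Hw Hz) as (vc & wc & c_le).
  rewrite <- (pow2_sqrt (center_dist2 u v x)), <- (pow2_sqrt (center_dist2 u w y)),
    <- (pow2_sqrt (center_dist2 v w z)), heron_sides
    by (apply Rlt_le, center_dist2_pos; lra).
  repeat apply Rmult_lt_0_compat; lra.
Qed.

Lemma tri_angle_sqrt (A B C : R) :
  0 <= A -> 0 <= B -> 0 <= C ->
  tri_angle (sqrt A) (sqrt B) (sqrt C) = acos (cos_law A B C).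
Proof.
  intros HA HB HC. unfold tri_angle, cos_law.
  now rewrite !pow2_sqrt.
Qed.

Lemma Phi0_cos_law (r0 r1 r2 T01 T02 T12 : R) :
  0 < r0 -> 0 < r1 -> 0 < r2 ->
  0 <= T01 <= PI / 2 -> 0 <= T02 <= PI / 2 -> 0 <= T12 <= PI / 2 ->
  Phi0 r0 r1 r2 T01 T02 T12
  = acos (cos_law (center_dist2 r0 r1 (cos T01)) (center_dist2 r0 r2 (cos T02))
                  (center_dist2 r1 r2 (cos T12))).
Proof.
  intros H0 H1 H2 H01 H02 H12.
  apply cos_range_01 in H01, H02, H12.
  apply tri_angle_sqrt; apply Rlt_le, center_dist2_pos; lra.
Qed.

Lemma Phi0_comm12 (r0 p q T01 T02 T12 : R) :
  Phi0 r0 p q T01 T02 T12 = Phi0 r0 q p T02 T01 T12.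
Proof.
  unfold Phi0, tri_angle.
  replace (center_dist q p T12) with (center_dist p q T12)
    by (unfold center_dist; f_equal; ring).
  f_equal. f_equal; ring.
Qed.

Lemma one_sub_cos_law_sq (A B C : R) :
  0 < A -> 0 < B -> 1 - (cos_law A B C)² = heron A B C / (4 * A * B).
Proof.
  intros HA HB. unfold cos_law, heron, Rsqr.
  assert (EA : A = sqrt A * sqrt A) by (rewrite sqrt_sqrt; lra).
  assert (EB : B = sqrt B * sqrt B) by (rewrite sqrt_sqrt; lra).
  assert (0 < sqrt A) by now apply sqrt_lt_R0.
  assert (0 < sqrt B) by now apply sqrt_lt_R0.
  set (a := sqrt A) in *. set (b := sqrt B) in *.
  rewrite EA, EB. field. lra.
Qed.

Lemma cos_law_bounds (A B C : R) :
  0 < A -> 0 < B -> 0 < heron A B C -> -1 < cos_law A B C < 1.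
Proof.
  intros HA HB HD.
  pose proof (one_sub_cos_law_sq A B C HA HB) as E.
  assert (0 < heron A B C / (4 * A * B)) by (apply Rdiv_lt_0_compat; nra).
  unfold Rsqr in E. nra.
Qed.

Lemma is_derive_center_dist2_exp (p c t : R) :
  is_derive (fun s => center_dist2 p (exp s) c) t (2 * (exp t ^ 2 + p * exp t * c)).
Proof. unfold center_dist2. auto_derive; [exact I | ring]. Qed.

Lemma is_derive_cos_law (fA fC : R -> R) (B t dA dC : R) :
  is_derive fA t dA -> is_derive fC t dC -> 0 < fA t -> 0 < B ->
  is_derive (fun s => cos_law (fA s) B (fC s)) t
    (- cos_law_rate (fA t) B (fC t) dA dC / (2 * fA t * sqrt (fA t) * sqrt B)).
Proof.
  intros HA HC Apos Bpos.
  assert (a_pos : 0 < sqrt (fA t)) by now apply sqrt_lt_R0.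
  assert (b_pos : 0 < sqrt B) by now apply sqrt_lt_R0.
  unfold cos_law; auto_derive.
  - repeat split; try (eexists; eassumption); auto; nra.
  - change (Derive (fun x => fA x) t) with (Derive fA t).
    change (Derive (fun x => fC x) t) with (Derive fC t).
    rewrite (is_derive_unique fA t dA HA), (is_derive_unique fC t dC HC).
    set (a := sqrt (fA t)) in *.
    assert (Ea : fA t = a * a) by (subst a; rewrite sqrt_sqrt; lra).
    rewrite Ea. unfold cos_law_rate. field. lra.
Qed.

Lemma is_derive_cos_law_exp (u w x z B t : R) :
  0 < u -> 0 <= x -> 0 < B ->
  let v := exp t in
  is_derive (fun s => cos_law (center_dist2 u (exp s) x) B (center_dist2 (exp s) w z)) t
    (- cos_law_rate (center_dist2 u v x) B (center_dist2 v w z)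
         (2 * (v ^ 2 + u * v * x)) (2 * (v ^ 2 + w * v * z))
       / (2 * center_dist2 u v x * sqrt (center_dist2 u v x) * sqrt B)).
Proof.
  intros Hu Hx HB v.
  apply (is_derive_cos_law (fun s => center_dist2 u (exp s) x)
                           (fun s => center_dist2 (exp s) w z));
    [apply is_derive_center_dist2_exp | | | exact HB].
  - apply is_derive_ext with (fun s => center_dist2 w (exp s) z);
      [intro; apply center_dist2_comm | apply is_derive_center_dist2_exp].
  - apply center_dist2_pos; auto using exp_pos.
Qed.

Lemma is_derive_acos (y : R) : -1 < y < 1 -> is_derive acos y (-1 / sqrt (1 - y²)).
Proof.
  intros Hy. apply is_derive_Reals.
  apply (derive_pt_eq_1 _ _ _ (derivable_pt_acos y Hy)).
  apply derive_pt_acos.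
Qed.

(* The derivative of acos g is -g' / sin (acos g), and sin (acos g) <= acos g. *)
Lemma acos_comp_Derive_le (g : R -> R) (t dg k : R) :
  0 <= k -> is_derive g t dg -> -1 < g t < 1 -> - dg <= k * (1 - (g t)²) ->
  ex_derive (fun s => acos (g s)) t /\
  Derive (fun s => acos (g s)) t <= k * acos (g t).
Proof.
  intros k_ge0 Hg g_range Hdg.
  pose proof (is_derive_comp _ _ _ _ _ (is_derive_acos _ g_range) Hg) as Hacos.
  split; [eexists; exact Hacos |].
  assert (s_le : sqrt (1 - (g t)²) <= acos (g t)).
  { rewrite <- sin_acos by lra. apply Rlt_le, sin_lt_x, acos_bound_lt, g_range. }
  assert (s_pos : 0 < sqrt (1 - (g t)²)) by (apply sqrt_lt_R0; unfold Rsqr; nra).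
  assert (Es : sqrt (1 - (g t)²) * sqrt (1 - (g t)²) = 1 - (g t)²)
    by (apply sqrt_sqrt; unfold Rsqr; nra).
  set (s := sqrt (1 - (g t)²)) in *.
  replace (Derive (fun s => acos (g s)) t) with (- dg / s).
  2: { symmetry. apply is_derive_unique.
       replace (- dg / s) with (scal dg (-1 / s))
    by (unfold scal; simpl; unfold mult; simpl; field; lra).
       exact Hacos. }
  apply Rle_trans with (k * s); [| now apply Rmult_le_compat_l].
  apply Rmult_le_reg_r with s; [lra |].
  unfold Rdiv. rewrite Rmult_assoc, Rinv_l by lra. nra.
Qed.

(* Q is affine in z and concave in y, so it lies above its bilinear
   interpolation between the four corners (y, z) in {0, 1}^2. *)
Lemma quadratic_vw_nonneg (x y z v w : R) :
  0 <= x <= 1 -> 0 <= y <= 1 -> 0 <= z <= 1 -> 0 <= v -> 0 <= w ->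
  0 <= (1 - x^2) * v^2 + (x^2 + 2*x*y + x*z + y + 2*z - 1) * v * w
       + (1 - y^2 + x * (2 - y) + z * (2 * y - 1)) * w^2.
Proof.
  intros Hx Hy Hz Hv Hw.
  set (Q y z := (1 - x^2) * v^2 + (x^2 + 2*x*y + x*z + y + 2*z - 1) * v * w
       + (1 - y^2 + x * (2 - y) + z * (2 * y - 1)) * w^2).
  change (0 <= Q y z).
  replace (Q y z) with ((1 - z) * ((1 - y) * Q 0 0 + y * Q 1 0)
                         + z * ((1 - y) * Q 0 1 + y * Q 1 1) + y * (1 - y) * w^2)
    by (unfold Q; ring).
  assert (form : forall a b c, 0 <= a -> 0 <= b -> 0 <= c ->
                   0 <= a * v^2 + b * (v * w) + c * w^2).
  { intros a b c Ha Hb Hc.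
    assert (0 <= a * v^2) by (apply Rmult_le_pos; [lra | apply pow2_ge_0]).
    assert (0 <= b * (v * w)) by (apply Rmult_le_pos; nra).
    assert (0 <= c * w^2) by (apply Rmult_le_pos; [lra | apply pow2_ge_0]).
    lra. }
  assert (Q00 : 0 <= Q 0 0).
  { replace (Q 0 0) with ((1 - x^2) * (v - w / 2)^2 + (3/4 + 2*x + x^2/4) * w^2)
      by (unfold Q; field).
    assert (0 <= (1 - x^2) * (v - w / 2)^2) by (apply Rmult_le_pos; [nra | apply pow2_ge_0]).
    assert (0 <= (3/4 + 2*x + x^2/4) * w^2) by (apply Rmult_le_pos; [nra | apply pow2_ge_0]).
    lra. }
  assert (Q10 : 0 <= Q 1 0).
  { replace (Q 1 0) with ((1 - x^2) * v^2 + (x^2 + 2*x) * (v * w) + x * w^2)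
      by (unfold Q; ring). apply form; nra. }
  assert (Q01 : 0 <= Q 0 1).
  { replace (Q 0 1) with ((1 - x^2) * v^2 + (x^2 + x + 1) * (v * w) + (2 * x) * w^2)
      by (unfold Q; ring). apply form; nra. }
  assert (Q11 : 0 <= Q 1 1).
  { replace (Q 1 1) with ((1 - x^2) * v^2 + (x^2 + 3*x + 2) * (v * w) + (x + 1) * w^2)
      by (unfold Q; ring). apply form; nra. }
  assert (0 <= y * (1 - y) * w^2) by (apply Rmult_le_pos; [nra | apply pow2_ge_0]).
  assert (0 <= (1 - y) * Q 0 0 + y * Q 1 0) by nra.
  assert (0 <= (1 - y) * Q 0 1 + y * Q 1 1) by nra.
  nra.
Qed.

Lemma cos_law_speed_le (A B C F : R) :
  0 < A -> 0 < B -> sqrt B * F <= sqrt A * heron A B C ->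
  - (- F / (2 * A * sqrt A * sqrt B)) <= 2 * (1 - (cos_law A B C)²).
Proof.
  intros HA HB HF. rewrite one_sub_cos_law_sq by assumption.
  assert (EA : A = sqrt A ^ 2) by (rewrite pow2_sqrt; lra).
  assert (EB : B = sqrt B ^ 2) by (rewrite pow2_sqrt; lra).
  assert (0 < sqrt A) by now apply sqrt_lt_R0.
  assert (0 < sqrt B) by now apply sqrt_lt_R0.
  set (a := sqrt A) in *. set (b := sqrt B) in *. set (D := heron A B C) in *.
  rewrite EA, EB.
  assert (0 < 2 * a ^ 3 * b ^ 2) by (repeat apply Rmult_lt_0_compat; try apply pow_lt; lra).
  apply Rmult_le_reg_r with (2 * a ^ 3 * b ^ 2); [assumption |].
  replace (- (- F / (2 * a ^ 2 * a * b)) * (2 * a ^ 3 * b ^ 2)) with (b * F) by (field; lra).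
  replace (2 * (D / (4 * a ^ 2 * b ^ 2)) * (2 * a ^ 3 * b ^ 2)) with (a * D) by (field; lra).
  exact HF.
Qed.

Section CenterTriangle.

(* u, v, w are the radii rho_0, rho_1, rho_2 and x, y, z the cosines of
   Theta_01, Theta_02, Theta_12. *)
Variables u v w x y z : R.
Hypotheses (u_pos : 0 < u) (v_pos : 0 < v) (w_pos : 0 < w).
Hypotheses (x_range : 0 <= x <= 1) (y_range : 0 <= y <= 1) (z_range : 0 <= z <= 1).

Let A := center_dist2 u v x.
Let B := center_dist2 u w y.
Let C := center_dist2 v w z.
(* Velocities of A and C when v = exp t moves with t. *)
Let F := cos_law_rate A B C (2 * (v^2 + u * v * x)) (2 * (v^2 + w * v * z)).

Lemma cos_law_rate_nonneg : 0 <= F.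
Proof.
  replace F with (2 * u * v * (w * (v + u * x) * (x * z + y) + u * (1 - x^2) * (v + w * z)))
    by (unfold F, A, B, C, cos_law_rate, center_dist2; field).
  assert (0 <= 1 - x^2) by nra.
  repeat apply Rmult_le_pos; try apply Rplus_le_le_0_compat; repeat apply Rmult_le_pos; nra.
Qed.

Lemma cos_law_rate_le_heron : 2 * (u + w) * F <= (u + v) * heron A B C.
Proof.
  set (Q := (1 - x^2) * v^2 + (x^2 + 2*x*y + x*z + y + 2*z - 1) * v * w
            + (1 - y^2 + x * (2 - y) + z * (2 * y - 1)) * w^2).
  set (c3 := (1 - y) * (x * (2 - z) + (1 - z^2)) + y * (x * (2 - z) + z * (2 - z))).
  assert (E : (u + v) * heron A B C - 2 * (u + w) * F
            = 4 * (u^3 * w^2 * (1 - y^2) + u^3 * v * w * (x * y + z)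
                   + 2 * u * v^3 * w * (x * z + y) + u * v^2 * w^2 * c3
                   + v^3 * w^2 * (1 - z^2) + u^2 * v * Q)).
  { unfold F, A, B, C, Q, c3, heron, cos_law_rate, center_dist2. field. }
  assert (0 <= Q) by (apply quadratic_vw_nonneg; lra).
  assert (0 <= c3) by (unfold c3; apply Rplus_le_le_0_compat; apply Rmult_le_pos; nra).
  assert (0 <= u^3 * w^2 * (1 - y^2)) by (repeat apply Rmult_le_pos; try apply pow_le; nra).
  assert (0 <= u^3 * v * w * (x * y + z)) by (repeat apply Rmult_le_pos; try apply pow_le; nra).
  assert (0 <= 2 * u * v^3 * w * (x * z + y)) by (repeat apply Rmult_le_pos; try apply pow_le; nra).
  assert (0 <= u * v^2 * w^2 * c3) by (repeat apply Rmult_le_pos; try apply pow_le; nra).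
  assert (0 <= v^3 * w^2 * (1 - z^2)) by (repeat apply Rmult_le_pos; try apply pow_le; nra).
  assert (0 <= u^2 * v * Q) by (repeat apply Rmult_le_pos; try apply pow_le; nra).
  lra.
Qed.

Lemma cos_law_rate_le_sqrt_heron : sqrt B * F <= sqrt A * heron A B C.
Proof.
  pose proof cos_law_rate_nonneg.
  pose proof cos_law_rate_le_heron.
  pose proof (heron_center_dist2_pos u v w x y z u_pos v_pos w_pos x_range y_range z_range)
    as D_pos.
  destruct (center_dist_bounds u v x u_pos v_pos x_range) as (ua & va & _).
  destruct (center_dist_bounds u w y u_pos w_pos y_range) as (_ & _ & b_le).
  fold A B C in D_pos, ua, va, b_le.
  apply Rle_trans with ((u + w) * F); [now apply Rmult_le_compat_r |].
  apply Rle_trans with ((u + v) * heron A B C / 2); [lra |].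
  assert (u + v <= 2 * sqrt A) by lra.
  nra.
Qed.

End CenterTriangle.

Lemma Phi0_exp_Derive_le (u w T01 T02 T12 t : R) :
  0 < u -> 0 < w ->
  0 <= T01 <= PI / 2 -> 0 <= T02 <= PI / 2 -> 0 <= T12 <= PI / 2 ->
  ex_derive (fun s => Phi0 u (exp s) w T01 T02 T12) t /\
  Derive (fun s => Phi0 u (exp s) w T01 T02 T12) t <= 2 * Phi0 u (exp t) w T01 T02 T12.
Proof.
  intros Hu Hw H01 H02 H12.
  pose proof (exp_pos t) as Hv.
  pose proof (cos_range_01 _ H01) as Hx.
  pose proof (cos_range_01 _ H02) as Hy.
  pose proof (cos_range_01 _ H12) as Hz.
  set (x := cos T01) in *. set (y := cos T02) in *. set (z := cos T12) in *.
  set (g s := cos_law (center_dist2 u (exp s) x) (center_dist2 u w y)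
                      (center_dist2 (exp s) w z)).
  assert (Phi0_g : forall s, Phi0 u (exp s) w T01 T02 T12 = acos (g s))
    by (intro s; apply Phi0_cos_law; auto using exp_pos).
  pose proof (center_dist2_pos u (exp t) x Hu Hv ltac:(lra)) as A_pos.
  pose proof (center_dist2_pos u w y Hu Hw ltac:(lra)) as B_pos.
  destruct (acos_comp_Derive_le g t _ 2 ltac:(lra)
              (is_derive_cos_law_exp u w x z _ t Hu ltac:(lra) B_pos)) as [Hex Hle].
  - apply cos_law_bounds; [assumption .. |].
    now apply heron_center_dist2_pos.
  - apply cos_law_speed_le; [assumption .. |].
    now apply cos_law_rate_le_sqrt_heron.
  - rewrite <- Phi0_g in Hle.
    split; [exact (ex_derive_ext _ _ _ (fun s => eq_sym (Phi0_g s)) Hex) |].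
    now rewrite (Derive_ext _ _ _ Phi0_g).
Qed.

Theorem lemma3p3 :
  exists C : R,
    forall (r0 r1 r2 T01 T02 T12 : R) (j : nat),
      0 < r0 -> 0 < r1 -> 0 < r2 ->
      0 <= T01 <= PI / 2 -> 0 <= T02 <= PI / 2 -> 0 <= T12 <= PI / 2 ->
      (j = 1%nat \/ j = 2%nat) ->
      ex_derive (Phi0_log j r0 r1 r2 T01 T02 T12) (ln (rho_of j r1 r2)) /\
      Derive (Phi0_log j r0 r1 r2 T01 T02 T12) (ln (rho_of j r1 r2))
        <= C * Phi0 r0 r1 r2 T01 T02 T12.
Proof.
  exists 2. intros r0 r1 r2 T01 T02 T12 j H0 H1 H2 H01 H02 H12 [-> | ->].
  - destruct (Phi0_exp_Derive_le r0 r2 T01 T02 T12 (ln r1) H0 H2 H01 H02 H12) as [Hex Hle].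
    rewrite exp_ln in Hle by exact H1.
    split; [exact Hex | exact Hle].
  - destruct (Phi0_exp_Derive_le r0 r1 T02 T01 T12 (ln r2) H0 H1 H02 H01 H12) as [Hex Hle].
    rewrite exp_ln in Hle by exact H2.
    assert (swap : forall t, Phi0 r0 (exp t) r1 T02 T01 T12 = Phi0_log 2 r0 r1 r2 T01 T02 T12 t)
      by (intro; symmetry; apply Phi0_comm12).
    split; [exact (ex_derive_ext _ _ _ swap Hex) |].
    rewrite <- (Derive_ext _ _ _ swap), (Phi0_comm12 r0 r1 r2). exact Hle.
Qed.
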